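(* Let $\mathfrak u(n)$ be the real vector space of skew-Hermitian $n\times n$ complex matrices with the Frobenius inner product $\langle a,b\rangle=\operatorname{Re}\operatorname{tr}(a^\dagger b)$ and norm $\|\cdot\|$, and let $g$ be a vector field on $\mathfrak u(n)$. For $z\in\mathfrak u(n)$ with distinct nonzero eigenvalues, write uniquely $g(z)=[L,z]+Pz$ with $L$ in the range of $K\mapsto[K,z]$ and $P$ commuting with $z$ (then $L$ is skew-Hermitian and $P$ Hermitian), write $L(z),P(z)$ for these, and set $M(z):=-L(z)+\tfrac12P(z)$ (so $M(z)^\dagger=L(z)+\tfrac12P(z)$ and $g(z)=M(z)^\dagger z+zM(z)$). Let $b_1,\dots,b_s$, $h>0$, and $z_0,z_1,Z_1,\dots,Z_s\in\mathfrak u(n)$, each $Z_i$ having distinct nonzero eigenvalues, satisfy \[ Z_i = z_0 + h\sum_{j=1}^{i-1}b_jg(Z_j) + \frac h2 b_ig(Z_i) - \frac{h^2}{4}b_i^2M(Z_i)^\dagger Z_iM(Z_i),\qquad z_1 = z_0 + h\sum_{i=1}^s b_ig(Z_i). \] Then \[ \tfrac12\|z_1\|^2 = \tfrac12\|z_0\|^2 - h\sum_{i=1}^s b_i\operatorname{tr}\bigl(Z_iP(Z_i)Z_i\bigr) - \frac{h^3}{4}\sum_{i=1}^s b_i^3\operatorname{tr}\bigl(M(Z_i)^\dagger Z_iP(Z_i)Z_iM(Z_i)\bigr). \] In particular, when $g(z)=[M(z)^\dagger,z]$, so that $P=0$, the Frobenius norm is conserved: $\|z_1\|=\|z_0\|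$.
   Context: $A^\dagger$ denotes the conjugate transpose; $[A,B]=AB-BA$. For $z$ with distinct nonzero eigenvalues, every matrix $K$ decomposes uniquely as $K=[L,z]+Pz$ with $L$ in the range of $X\mapsto[X,z]$ and $P$ in its kernel (matrices commuting with $z$); in the eigenbasis of $z$ this is the splitting of $K$ into off-diagonal and diagonal parts. *)

(* Complex scalars: an arbitrary numClosedFieldType C
   (e.g. the complex numbers R[i]); the statement is purely algebraic. *)
From mathcomp Require Import all_boot all_order all_algebra.
Set Implicit Arguments. Unset Strict Implicit. Unset Printing Implicit Defensive.
Import Order.TTheory GRing.Theory Num.Theory.
Local Open Scope ring_scope.

Section Defs.
Variables (C : numClosedFieldType) (n : nat).

Definition dag (A : 'M[C]_n) : 'M[C]_n := (map_mx Num.conj A)^T.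

Definition skew_herm (A : 'M[C]_n) : Prop := dag A = - A.

Definition comm (A B : 'M[C]_n) : 'M[C]_n := A *m B - B *m A.

Definition frob_inner (a b : 'M[C]_n) : C := 'Re (\tr (dag a *m b)).
Definition frob_norm (a : 'M[C]_n) : C := sqrtC (frob_inner a a).

Definition distinct_nonzero_eigs (z : 'M[C]_n) : Prop :=
  exists e : 'I_n -> C, injective e /\ forall i, eigenvalue z (e i) /\ e i != 0.

(* L, P realise the decomposition g(z) = [L,z] + P z with L in the range of
   K |-> [K,z] and P commuting with z, at every z in u(n) with distinct
   nonzero eigenvalues (this decomposition is unique, so L, P are L(z), P(z)). *)
Definition LP_decomp (g L P : 'M[C]_n -> 'M[C]_n) : Prop :=
  forall z, skew_herm z -> distinct_nonzero_eigs z ->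
    [/\ g z = comm (L z) z + P z *m z,
        exists K, L z = comm K z &
        P z *m z = z *m P z].

Definition Mof (L P : 'M[C]_n -> 'M[C]_n) (z : 'M[C]_n) : 'M[C]_n :=
  - L z + 2^-1 *: P z.
End Defs.

(* Without the h^2 term the stages form the diagonally implicit Runge-Kutta method
   a_ij = b_j (j < i), a_ii = b_i / 2, which satisfies b_i a_ij + b_j a_ji = b_i b_j.
   Expanding tr(z1^2) = -||z1||^2 with the stage equations, the cross terms
   h^2 b_i b_j tr(g(Z_i) g(Z_j)) therefore cancel, leaving 2 h b_i tr(Z_i g(Z_i)) and
   the correction h^3/2 b_i^3 tr(M^† Z_i M g(Z_i)).  As g is skew-Hermitian and the
   range of ad z is orthogonal to the commutant of z for the positive definite form
   tr(A^† B), L(z) is skew-Hermitian and P(z)^† z = P(z) z.  Hence g = M^† z + z M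
   and (M + M^†) z = P z, which turns the two remaining traces into tr(Z_i P Z_i)
   and tr(M^† Z_i P Z_i M). *)

From mathcomp Require Import all_boot all_order all_algebra.
From mathcomp Require Import ring.
Set Implicit Arguments. Unset Strict Implicit.
Import Order.TTheory GRing.Theory Num.Theory.
Local Open Scope ring_scope.

Lemma scale_half_add_self (R : numFieldType) (V : lmodType R) (v : V) :
  2^-1 *: (v + v) = v.
Proof. by rewrite -mulr2n -scaler_nat scalerA mulVf ?pnatr_eq0 // scale1r. Qed.

Lemma sum_ord_sym_split (R : comPzRingType) (s : nat) (f : 'I_s -> 'I_s -> R) :
  (forall i j, f i j = f j i) ->
  \sum_(i < s) \sum_(j < s) f i j =
    2 * \sum_(i < s) \sum_(j < s | (j < i)%N) f j i + \sum_(i < s) f i i.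
Proof.
move=> f_sym.
have row_split i : \sum_(j < s) f i j =
    \sum_(j < s | (j < i)%N) f j i + f i i + \sum_(j < s | (i < j)%N) f i j.
  rewrite (bigID (fun j : 'I_s => (j < i)%N)) /= [X in _ + X](bigD1 i) ?ltnn //=.
  rewrite addrA; congr (_ + _ + _); first by apply: eq_bigr => j _; rewrite f_sym.
  by apply: eq_bigl => j; rewrite -leqNgt andbC eq_sym ltn_neqAle.
rewrite (eq_bigr _ (fun i _ => row_split i)) !big_split /=.
rewrite (exchange_big_dep xpredT) //=; ring.
Qed.

Section TraceIdentities.
Variables (R : fieldType) (n : nat).
Implicit Types A B X : 'M[R]_n.

Lemma mxtrace_mul_sandwich A B X :
  \tr (B *m X *m A *m (B *m X + X *m A)) = \tr (B *m X *m (A + B) *m X *m A).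
Proof.
rewrite !mulmxDr !mulmxDl !raddfD /= addrC.
by congr (_ + _); [rewrite !mulmxA | rewrite mxtrace_mulC !mulmxA].
Qed.

Hypothesis two_neq0 : (2 : R) != 0.

Lemma mxtrace_sqr_rk_step (s : nat) (b : 'I_s -> R) (h : R) (z0 z1 : 'M[R]_n)
    (Z G W : 'I_s -> 'M[R]_n) :
  (forall i : 'I_s, Z i = z0 + h *: (\sum_(j < s | (j < i)%N) b j *: G j)
       + (h / 2 * b i) *: G i - (h ^+ 2 / 4 * b i ^+ 2) *: W i) ->
  z1 = z0 + h *: (\sum_(i < s) b i *: G i) ->
  \tr (z1 *m z1) = \tr (z0 *m z0) + 2 * h * (\sum_(i < s) b i * \tr (Z i *m G i))
                   + h ^+ 3 / 2 * (\sum_(i < s) b i ^+ 3 * \tr (W i *m G i)).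
Proof.
move=> Z_def ->; set S := \sum_(i < s) _.
have tr_z0G i : \tr (z0 *m G i) = \tr (Z i *m G i)
    - h * \sum_(j < s | (j < i)%N) b j * \tr (G j *m G i)
    - h / 2 * b i * \tr (G i *m G i) + h ^+ 2 / 4 * b i ^+ 2 * \tr (W i *m G i).
  rewrite Z_def !mulmxDl mulNmx -!scalemxAl !raddfD raddfN /= !mxtraceZ.
  rewrite mulmx_suml raddf_sum /=.
  under eq_bigr do rewrite -scalemxAl mxtraceZ.
  ring.
have tr_z0S : \tr (z0 *m S) = \sum_(i < s) b i * \tr (Z i *m G i)
    - h * \sum_(i < s) \sum_(j < s | (j < i)%N) b j * \tr (G j *m G i) * b i
    - h / 2 * \sum_(i < s) b i * \tr (G i *m G i) * b i
    + h ^+ 2 / 4 * \sum_(i < s) b i ^+ 3 * \tr (W i *m G i).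
  rewrite mulmx_sumr raddf_sum !mulr_sumr -!sumrB -big_split /=.
  apply: eq_bigr => i _; rewrite -scalemxAr mxtraceZ tr_z0G -mulr_suml; ring.
have tr_SS : \tr (S *m S) = \sum_(i < s) \sum_(j < s) b i * \tr (G i *m G j) * b j.
  rewrite mulmx_suml raddf_sum; apply: eq_bigr => i _ /=.
  rewrite -scalemxAl mxtraceZ mulmx_sumr raddf_sum mulr_sumr; apply: eq_bigr => j _ /=.
  by rewrite -scalemxAr mxtraceZ mulrCA mulrC.
rewrite !mulmxDl !mulmxDr -!scalemxAl -!scalemxAr !raddfD /= !mxtraceZ.
rewrite (mxtrace_mulC S z0) tr_z0S tr_SS sum_ord_sym_split; last first.
  by move=> i j; rewrite mxtrace_mulC; ring.
by field; rewrite two_neq0 (natrM R 2 2) mulf_neq0.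
Qed.
End TraceIdentities.

Section ConjugateTranspose.
Variables (C : numClosedFieldType) (n : nat).
Implicit Types A B K X z : 'M[C]_n.

Lemma dagD A B : dag (A + B) = dag A + dag B.
Proof. by rewrite /dag map_mxD linearD. Qed.

Lemma dagN A : dag (- A) = - dag A.
Proof. by rewrite /dag map_mxN linearN. Qed.

Lemma dagZ a A : dag (a *: A) = a^* *: dag A.
Proof. by rewrite /dag map_mxZ linearZ. Qed.

Lemma dagM A B : dag (A *m B) = dag B *m dag A.
Proof. by rewrite /dag map_mxM trmx_mul. Qed.

Lemma mxtrace_dag_mul A : \tr (dag A *m A) = \sum_i \sum_k `|A k i| ^+ 2.
Proof.
apply: eq_bigr => i _; rewrite mxE; apply: eq_bigr => k _.
by rewrite /dag !mxE normCKC.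
Qed.

Lemma mxtrace_dag_mul_ge0 A : 0 <= \tr (dag A *m A).
Proof. by rewrite mxtrace_dag_mul; do 2![apply: sumr_ge0 => ? _]; exact: exprn_ge0. Qed.

Lemma mxtrace_dag_mul_eq0 A : \tr (dag A *m A) = 0 -> A = 0.
Proof.
rewrite mxtrace_dag_mul => tr0; apply/matrixP => k i; rewrite mxE.
have col0 : \sum_k `|A k i| ^+ 2 = 0.
  apply: (psumr_eq0P _ tr0) => // j _.
  by apply: sumr_ge0 => l _; exact: exprn_ge0.
have : `|A k i| ^+ 2 = 0 by apply: (psumr_eq0P _ col0) => // j _; exact: exprn_ge0.
by move/eqP; rewrite sqrf_eq0 normr_eq0 => /eqP.
Qed.

Lemma frob_inner_skew z : skew_herm z -> frob_inner z z = - \tr (z *m z).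
Proof.
move=> z_skew; rewrite /frob_inner.
have /Creal_ReP -> := ger0_real (mxtrace_dag_mul_ge0 z).
by rewrite z_skew mulNmx raddfN.
Qed.

Lemma commDl A B X : comm (A + B) X = comm A X + comm B X.
Proof. by rewrite /comm mulmxDl mulmxDr opprD addrACA. Qed.

Lemma mxtrace_comm_mulmx A B X : B *m X = X *m B -> \tr (comm A B *m X) = 0.
Proof.
move=> BX; rewrite /comm mulmxBl raddfB /= -mulmxA BX mulmxA mxtrace_mulC.
by rewrite mulmxA subrr.
Qed.

Lemma dag_comm_skew K z : skew_herm z -> dag (comm K z) = comm (dag K) z.
Proof. by move=> z_skew; rewrite /comm dagD dagN !dagM z_skew mulNmx mulmxN opprK addrC. Qed.

Lemma comm_commuting_eq0 K z :
  skew_herm z -> comm K z *m z = z *m comm K z -> comm K z = 0.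
Proof.
move=> z_skew Kz_z; apply: mxtrace_dag_mul_eq0.
by rewrite dag_comm_skew // mxtrace_comm_mulmx.
Qed.

Lemma skew_decomp_parts z L0 P0 K :
  skew_herm z -> skew_herm (comm L0 z + P0 *m z) ->
  L0 = comm K z -> P0 *m z = z *m P0 ->
  [/\ skew_herm L0, dag P0 *m z = P0 *m z & dag P0 *m z = z *m dag P0].
Proof.
move=> z_skew sum_skew L0_def P0z.
have P0dz : dag P0 *m z = z *m dag P0.
  by apply: oppr_inj; rewrite -mulmxN -mulNmx -z_skew -!dagM P0z.
set A := L0 + dag L0; set B := P0 - dag P0.
have Bz : B *m z = z *m B by rewrite mulmxBl mulmxBr P0z P0dz.
have ABz : comm A z = - (B *m z).
  apply/eqP; rewrite -addr_eq0 -[X in _ == X](addNr (comm L0 z + P0 *m z)) -sum_skew.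
  rewrite dagD dag_comm_skew // dagM z_skew mulNmx commDl mulmxBl.
  by rewrite -P0dz addrACA addrC.
have Az0 : comm A z = 0.
  apply: comm_commuting_eq0 => //.
  by rewrite ABz mulNmx mulmxN {1}Bz -mulmxA.
have A0 : A = 0.
  have A_def : A = comm (K + dag K) z by rewrite commDl -dag_comm_skew // -L0_def.
  rewrite A_def; apply: comm_commuting_eq0 => //; rewrite -A_def.
  exact: subr0_eq Az0.
split => //.
  by apply/eqP; rewrite -addr_eq0 addrC -/A A0.
have : B *m z = 0 by apply: oppr_inj; rewrite -ABz Az0 oppr0.
by rewrite mulmxBl => /subr0_eq/esym.
Qed.
End ConjugateTranspose.

Section SkewHermitianPart.
Variables (C : numClosedFieldType) (n : nat) (L P : 'M[C]_n -> 'M[C]_n) (z : 'M[C]_n).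
Hypothesis Lz_skew : skew_herm (L z).
Hypotheses (Pz_herm : dag (P z) *m z = P z *m z) (Pz_comm : P z *m z = z *m P z).
Hypothesis Pdz_comm : dag (P z) *m z = z *m dag (P z).
Local Notation M := (Mof L P z).

Lemma dag_Mof : dag M = L z + 2^-1 *: dag (P z).
Proof. by rewrite /Mof dagD dagN dagZ Lz_skew opprK fmorphV rmorph_nat. Qed.

Lemma Mof_add_dag : M + dag M = 2^-1 *: (P z + dag (P z)).
Proof. by rewrite dag_Mof /Mof addrACA addNr add0r scalerDr. Qed.

Lemma Mof_add_dag_mulmx : (M + dag M) *m z = P z *m z.
Proof. by rewrite Mof_add_dag -scalemxAl mulmxDl Pz_herm scale_half_add_self. Qed.

Lemma mulmx_Mof_add_dag : z *m (M + dag M) = P z *m z.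
Proof.
by rewrite Mof_add_dag -scalemxAr mulmxDr -Pz_comm -Pdz_comm Pz_herm scale_half_add_self.
Qed.

Lemma comm_add_mulmx_Mof : comm (L z) z + P z *m z = dag M *m z + z *m M.
Proof.
rewrite dag_Mof /Mof mulmxDl mulmxDr mulmxN -scalemxAl -scalemxAr Pz_herm -Pz_comm.
by rewrite addrACA -scalerDr scale_half_add_self.
Qed.
End SkewHermitianPart.

Section VectorField.
Variables (C : numClosedFieldType) (n : nat) (g L P : 'M[C]_n -> 'M[C]_n).
Hypotheses (g_skew : forall z, skew_herm z -> skew_herm (g z)) (gLP : LP_decomp g L P).
Variable z : 'M[C]_n.
Hypotheses (z_skew : skew_herm z) (z_eigs : distinct_nonzero_eigs z).
Local Notation M := (Mof L P z).

Lemma LP_decomp_parts :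
  [/\ g z = comm (L z) z + P z *m z, skew_herm (L z), dag (P z) *m z = P z *m z,
      P z *m z = z *m P z & dag (P z) *m z = z *m dag (P z)].
Proof.
have [g_def [K L_def] Pz_comm] := gLP z_skew z_eigs.
have := g_skew z_skew; rewrite g_def => gz_skew.
by have [] := skew_decomp_parts z_skew gz_skew L_def Pz_comm.
Qed.

Lemma field_Mof : g z = dag M *m z + z *m M.
Proof.
have [-> Lz_skew Pz_herm Pz_comm _] := LP_decomp_parts.
exact: comm_add_mulmx_Mof Lz_skew Pz_herm Pz_comm.
Qed.

Lemma mxtrace_mul_field : \tr (z *m g z) = \tr (z *m P z *m z).
Proof.
have [-> _ _ _ _] := LP_decomp_parts.
by rewrite mulmxDr raddfD /= mxtrace_mulC mxtrace_comm_mulmx // add0r mulmxA.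
Qed.

Lemma mxtrace_Mof_field :
  \tr (dag M *m z *m M *m g z) = \tr (dag M *m z *m P z *m z *m M).
Proof.
have [_ Lz_skew Pz_herm _ _] := LP_decomp_parts.
rewrite field_Mof mxtrace_mul_sandwich -(mulmxA _ (M + dag M)).
by rewrite (Mof_add_dag_mulmx Lz_skew Pz_herm) mulmxA.
Qed.

Lemma P_mulmx_eq0 : g z = comm (dag M) z -> P z *m z = 0.
Proof.
have [_ Lz_skew Pz_herm Pz_comm Pdz_comm] := LP_decomp_parts.
move=> g_comm; rewrite -(mulmx_Mof_add_dag Lz_skew Pz_herm Pz_comm Pdz_comm) mulmxDr.
have : dag M *m z + z *m M = dag M *m z + - (z *m dag M) by rewrite -field_Mof g_comm.
by move/addrI ->; rewrite addNr.
Qed.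
End VectorField.

Lemma frob_norm_sqr_skew (C : numClosedFieldType) (n : nat) (z : 'M[C]_n) :
  skew_herm z -> frob_norm z ^+ 2 = - \tr (z *m z).
Proof. by move=> z_skew; rewrite sqrtCK frob_inner_skew. Qed.

Theorem proposition4p4 (C : numClosedFieldType) (n s : nat)
  (g L P : 'M[C]_n -> 'M[C]_n)
  (b : 'I_s -> C) (h : C) (z0 z1 : 'M[C]_n) (Z : 'I_s -> 'M[C]_n) :
  (forall z, skew_herm z -> skew_herm (g z)) ->
  LP_decomp g L P ->
  (forall i, b i \is Num.real) -> 0 < h ->
  skew_herm z0 -> skew_herm z1 ->
  (forall i, skew_herm (Z i) /\ distinct_nonzero_eigs (Z i)) ->
  (forall i : 'I_s,
     Z i = z0 + h *: (\sum_(j < s | (j < i)%N) b j *: g (Z j))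
              + (h / 2 * b i) *: g (Z i)
              - (h ^+ 2 / 4 * b i ^+ 2) *:
                  (dag (Mof L P (Z i)) *m Z i *m Mof L P (Z i))) ->
  z1 = z0 + h *: (\sum_(i < s) b i *: g (Z i)) ->
  (frob_norm z1 ^+ 2 / 2 =
     frob_norm z0 ^+ 2 / 2
     - h * (\sum_(i < s) b i * \tr (Z i *m P (Z i) *m Z i))
     - h ^+ 3 / 4 * (\sum_(i < s) b i ^+ 3 *
          \tr (dag (Mof L P (Z i)) *m Z i *m P (Z i) *m Z i *m Mof L P (Z i))))
  /\ ((forall i, g (Z i) = comm (dag (Mof L P (Z i))) (Z i)) ->
      frob_norm z1 = frob_norm z0).
Proof.
move=> g_skew gLP _ _ z0_skew z1_skew Z_ok Z_def z1_def.
have energy : \tr (z1 *m z1) = \tr (z0 *m z0)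
    + 2 * h * (\sum_(i < s) b i * \tr (Z i *m P (Z i) *m Z i))
    + h ^+ 3 / 2 * (\sum_(i < s) b i ^+ 3 *
          \tr (dag (Mof L P (Z i)) *m Z i *m P (Z i) *m Z i *m Mof L P (Z i))).
  have two_neq0 : (2 : C) != 0 by rewrite pnatr_eq0.
  rewrite (mxtrace_sqr_rk_step two_neq0 Z_def z1_def).
  congr (_ + _ * _ + _ * _); apply: eq_bigr => i _; have [Zi_skew Zi_eigs] := Z_ok i.
    by rewrite (mxtrace_mul_field g_skew gLP).
  by rewrite (mxtrace_Mof_field g_skew gLP).
split; first by rewrite !frob_norm_sqr_skew // energy; field.
move=> g_comm; rewrite /frob_norm !frob_inner_skew // energy !big1 ?mulr0 ?addr0 // => i _.
all: have [Zi_skew Zi_eigs] := Z_ok i.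
all: by rewrite -(mulmxA _ (P (Z i))) (P_mulmx_eq0 g_skew gLP Zi_skew Zi_eigs (g_comm i))
       ?(mulmx0, mul0mx) raddf0 mulr0.
Qed.
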